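(* Let $S=\langle n_1,n_2,n_3,n_4\rangle$ be a pseudo-symmetric numerical semigroup with embedding dimension $4$, with generators labeled so that the (unique) RF-matrix of $F(S)/2$ is $$\mathrm{RF}(F(S)/2)=\begin{pmatrix} -1 & \alpha_2-1 & 0 & 0\\ 0 & -1 & \alpha_3-1 & 0\\ \alpha_1-1 & 0 & -1 & \alpha_4-1\\ \alpha_1-1 & a & 0 & -1\end{pmatrix}$$ for some non-negative integer $a$ (such a labeling always exists). Then every $n_i$ is odd if and only if one of the following holds: 1) $F(S)/2$ is odd and every row of $\mathrm{RF}(F(S)/2)$ is odd; 2) $F(S)/2$ is even and every row of $\mathrm{RF}(F(S)/2)$ is even.
   Context: $F(S)=\max(\mathbb{Z}\setminus S)$. A pseudo-Frobenius number of $S$ is an integer $f\notin S$ with $f+s\in S$ for all $s\in S\setminus\{0\}$; $S$ is pseudo-symmetric if its set of pseudo-Frobenius numbers is $\{F(S)/2,F(S)\}$. For $S$ minimally generated by $n_1,\dots,n_4$, $\alpha_i$ is the least positive integer such that $\alpha_in_i$ is a non-negative integer combination of the $n_j$, $j\ne i$. For a pseudo-Frobenius number $f$, an RF-matrix of $f$ is a $4\times4$ integer matrix $(a_{ij})$ with $a_{ii}=-1$, $a_{ij}\geq 0$ for $i\neq j$, and $f=\sum_{j=1}^4 a_{ij}n_j$ for every $i$. The $i$-th row is called even (resp. odd) if $\sum_{j=1}^4 a_{ij}$ is even (resp. odd). *)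

From HB Require Import structures.
From mathcomp Require Import all_boot all_order all_algebra.
Set Implicit Arguments. Unset Strict Implicit. Unset Printing Implicit Defensive.
Import Order.TTheory GRing.Theory Num.Theory.
Local Open Scope ring_scope.

Definition inS (n : 'I_4 -> nat) (x : int) : Prop :=
  exists c : 'I_4 -> nat, x = ((\sum_(j < 4) c j * n j)%N)%:Z.

Definition in_others (n : 'I_4 -> nat) (i : 'I_4) (m : nat) : Prop :=
  exists c : 'I_4 -> nat, c i = 0%N /\ m = (\sum_(j < 4) c j * n j)%N.

(* S is a numerical semigroup: Z \ S is finite (equivalently, S contains
   all sufficiently large integers; negatives are never in S). *)
Definition numerical (n : 'I_4 -> nat) : Prop :=
  exists b : int, forall x : int, b <= x -> inS n x.

Definition minimally_generated (n : 'I_4 -> nat) : Prop :=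
  forall i : 'I_4, ~ in_others n i (n i).

Definition is_frobenius (n : 'I_4 -> nat) (F : int) : Prop :=
  ~ inS n F /\ forall x : int, F < x -> inS n x.

Definition pseudo_frobenius (n : 'I_4 -> nat) (f : int) : Prop :=
  ~ inS n f /\ forall s : nat, (0 < s)%N -> inS n s%:Z -> inS n (f + s%:Z).

Definition is_alpha (n : 'I_4 -> nat) (i : 'I_4) (k : nat) : Prop :=
  [/\ (0 < k)%N, in_others n i (k * n i)%N &
      forall k' : nat, (0 < k')%N -> (k' < k)%N -> ~ in_others n i (k' * n i)%N].

Definition RF_matrix (n : 'I_4 -> nat) (f : int) (A : 'M[int]_4) : Prop :=
  forall i : 'I_4,
    [/\ A i i = -1,
        forall j : 'I_4, i != j -> 0 <= A i j
      & f = \sum_(j < 4) A i j * (n j)%:Z].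

Definition row_sum (A : 'M[int]_4) (i : 'I_4) : int := \sum_(j < 4) A i j.
Definition row_even (A : 'M[int]_4) (i : 'I_4) : bool := (2 %| row_sum A i)%Z.
Definition row_odd (A : 'M[int]_4) (i : 'I_4) : bool := ~~ row_even A i.

(* The matrix
    [ -1      al2-1  0      0     ]
    [  0      -1     al3-1  0     ]
    [ al1-1   0      -1     al4-1 ]
    [ al1-1   a      0      -1    ]
   where al_{k+1} = al (inord k) (paper's 1-based index k+1 = our index k). *)
Definition RF_pattern (al : 'I_4 -> nat) (a : nat) : 'M[int]_4 :=
  \matrix_(i < 4, j < 4)
    let alz (k : nat) : int := (al (inord k))%:Z - 1 in
    match val i, val j with
    | 0, 0 => -1 | 0, 1 => alz 1%N | 0, _ => 0
    | 1, 1 => -1 | 1, 2 => alz 2%N | 1, _ => 0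
    | 2, 0 => alz 0%N | 2, 2 => -1 | 2, 3 => alz 3%N | 2, _ => 0
    | _, 0 => alz 0%N | _, 1 => a%:Z | _, 3 => -1 | _, _ => 0
    end.

From HB Require Import structures.
From mathcomp Require Import all_boot all_order all_algebra.
From mathcomp Require Import ring.
Import Order.TTheory GRing.Theory Num.Theory.
Local Open Scope ring_scope.

(** Reduce everything modulo 2, writing [y_j] for the parity of [n_j - 1].
    Each row [h = sum_j A_ij n_j] of an RF-matrix gives
    [h - rowsum_i = sum_j A_ij y_j (mod 2)]. Hence if all [n_j] are odd, every
    row sum has the parity of [h], which is exactly the stated disjunction.
    Conversely, if all row sums have the parity of [h], then [y] lies in the
    kernel of the pattern matrix mod 2 and its row sums agree; for this
    pattern that forces [y] to be constant, and [y = 1] (all [n_j] even) is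
    impossible since a numerical semigroup contains odd integers. Only the
    RF-equations of [F(S)/2] and numericity are needed. *)

Local Notation par z := (z%:~R : 'F_2).
Local Notation i1 := (lift ord0 (ord0 : 'I_3)).
Local Notation i2 := (lift ord0 (lift ord0 (ord0 : 'I_2))).
Local Notation i3 := (lift ord0 (lift ord0 (lift ord0 (ord0 : 'I_1)))).

Lemma forall_ord4 (P : 'I_4 -> Prop) :
  P ord0 -> P i1 -> P i2 -> P i3 -> forall i, P i.
Proof.
move=> P0 P1 P2 P3 [[|[|[|[|k]]]] lt_i4] //.
- by rewrite (_ : Ordinal _ = ord0) //; apply: val_inj.
- by rewrite (_ : Ordinal _ = i1) //; apply: val_inj.
- by rewrite (_ : Ordinal _ = i2) //; apply: val_inj.
- by rewrite (_ : Ordinal _ = i3) //; apply: val_inj.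
Qed.

Lemma F2_cases (x : 'F_2) : x = 0 \/ x = 1.
Proof. by case: x => [[|[|k]]] //= lt_k2; [left|right]; apply/val_inj. Qed.

Lemma F2_neq0 (x : 'F_2) : (x != 0) = (x == 1).
Proof. by case: (F2_cases x) => ->. Qed.

Lemma dvdz2_F2 (z : int) : (2 %| z)%Z = (par z == 0).
Proof.
have char2 : (2 \in [pchar 'F_2])%N by apply: pchar_Fp.
by case: z => k; rewrite ?NegzE ?mulrNz ?oppr_eq0 pmulrn -(dvdn_pcharf char2).
Qed.

Lemma odd_F2 (k : nat) : odd k = (k%:R != 0 :> 'F_2).
Proof.
by rewrite -[k%:R]pmulrn -(dvdz2_F2 k) -[(2 %| _)%Z]/(2 %| k)%N dvdn2 negbK.
Qed.

Lemma numerical_odd_generator {n : 'I_4 -> nat} :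
  numerical n -> exists i, odd (n i).
Proof.
case=> b inS_ge_b; have [|c Ec] := inS_ge_b ((2 * `|b|).+1)%:Z.
  rewrite (le_trans (ler_norm b)) // -abszE lez_nat.
  by rewrite mul2n -addnn leqW ?leq_addl.
suff /existsP[i odd_ni] : [exists i, odd (n i)] by exists i.
apply: contraT => /existsPn all_even.
have : (2 %| \sum_(j < 4) c j * n j)%N.
  by apply: dvdn_sum => j _; apply: dvdn_mull; rewrite dvdn2 all_even.
by case: Ec => <-; rewrite dvdn2 /= oddM.
Qed.

Lemma RF_row_sum_gap (R : comNzRingType) {n : 'I_4 -> nat} {f : int}
    {A : 'M[int]_4} (i : 'I_4) :
  RF_matrix n f A ->
  f%:~R - (row_sum A i)%:~R = \sum_j (A i j)%:~R * ((n j)%:R - 1) :> R.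
Proof.
case/(_ i) => _ _ ->; rewrite /row_sum !rmorph_sum -sumrB.
by apply: eq_bigr => j _; rewrite rmorphM /= -pmulrn mulrBr mulr1.
Qed.

Lemma RF_row_sum_parity_of_odd (n : 'I_4 -> nat) (f : int) (A : 'M[int]_4) :
  RF_matrix n f A -> (forall j, odd (n j)) ->
  forall i, par (row_sum A i) = par f.
Proof.
move=> RFA odd_n i; apply/eqP.
rewrite eq_sym -subr_eq0 (RF_row_sum_gap _ _ RFA).
apply/eqP/big1 => j _; have := odd_n j; rewrite odd_F2 F2_neq0 => /eqP->.
by rewrite subrr mulr0.
Qed.

Lemma row_parities_agreeP (A : 'M[int]_4) (h : int) :
  (forall i, par (row_sum A i) = par h) <->
  ((~~ (2 %| h)%Z /\ forall i, row_odd A i) \/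
   ((2 %| h)%Z /\ forall i, row_even A i)).
Proof.
rewrite /row_odd /row_even !dvdz2_F2.
case: (F2_cases (par h)) => ->; rewrite ?oner_eq0 ?eqxx /=; split.
- by move=> sum_even; right; split=> // i; rewrite dvdz2_F2 sum_even.
- by case=> [[]|[_ sum_even]] // i; apply/eqP; rewrite -dvdz2_F2.
- by move=> sum_odd; left; split=> // i; rewrite dvdz2_F2 sum_odd oner_eq0.
- by case=> [[_ sum_odd]|[]] // i; apply/eqP; rewrite -F2_neq0 -dvdz2_F2.
Qed.

Lemma F2_pattern_kernel {b0 b1 b2 b3 c y0 y1 y2 y3 : 'F_2} :
  - y0 + b1 * y1 = 0 -> - y1 + b2 * y2 = 0 ->
  b0 * y0 - y2 + b3 * y3 = 0 -> b0 * y0 + c * y1 - y3 = 0 ->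
  - 1 + b1 = - 1 + b2 -> - 1 + b2 = b0 + c - 1 ->
  [/\ y0 = 0, y1 = 0, y2 = 0 & y3 = 0] \/ [/\ y0 = 1, y1 = 1, y2 = 1 & y3 = 1].
Proof.
move=> e0 e1 e2 e3 r01 r13; case: (F2_cases y1) => y1E; rewrite y1E in e0 e1 e3.
- have y0E : y0 = 0 by apply/eqP; rewrite -oppr_eq0 -e0 mulr0 addr0.
  rewrite y0E in e2 e3.
  have y3E : y3 = 0 by apply/eqP; rewrite -oppr_eq0 -e3 !mulr0 !add0r.
  rewrite y3E in e2.
  have y2E : y2 = 0 by apply/eqP; rewrite -oppr_eq0 -e2 !mulr0 add0r addr0.
  by left.
- have b2y2 : b2 * y2 = 1 by apply/eqP; rewrite -subr_eq0 addrC e1.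
  have y2E : y2 = 1.
    case: (F2_cases y2) b2y2 => -> //.
    by rewrite mulr0 => /eqP; rewrite eq_sym oner_eq0.
  have b2E : b2 = 1 by rewrite -b2y2 y2E mulr1.
  have b1E : b1 = 1 by apply: (addrI (-1)); rewrite r01 b2E.
  have y0E : y0 = 1 by apply/eqP; rewrite eq_sym -subr_eq0 addrC -e0 b1E mulr1.
  have b0c : b0 + c = 1 by apply: (addIr (-1)); rewrite -r13 b2E addrC.
  have y3E : y3 = 1 by apply/eqP; rewrite eq_sym -subr_eq0 -b0c -e3 y0E !mulr1.
  by right.
Qed.

Lemma RF_pattern_mulE (al : 'I_4 -> nat) (a : nat) (v : 'I_4 -> 'F_2) :
  let P i j := par (RF_pattern al a i j) in
  let b k := par ((al (inord k))%:Z - 1) in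
  [/\ \sum_j P ord0 j * v j = - v ord0 + b 1%N * v i1,
      \sum_j P i1 j * v j = - v i1 + b 2%N * v i2,
      \sum_j P i2 j * v j = b 0%N * v ord0 - v i2 + b 3%N * v i3
    & \sum_j P i3 j * v j = b 0%N * v ord0 + a%:R * v i1 - v i3].
Proof.
by rewrite /= !big_ord_recl !big_ord0 /= !mxE /= -pmulrn; split; ring.
Qed.

Lemma RF_pattern_odd_of_row_parities (n al : 'I_4 -> nat) (a : nat) (h : int) :
  numerical n -> RF_matrix n h (RF_pattern al a) ->
  (forall i, par (row_sum (RF_pattern al a) i) = par h) -> forall i, odd (n i).
Proof.
move=> num_n RFh rows_h; set P := RF_pattern al a in RFh rows_h *.
pose y j : 'F_2 := (n j)%:R - 1.
have P_y i : 0 = \sum_j par (P i j) * y j.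
  by rewrite -(RF_row_sum_gap _ _ RFh) rows_h subrr.
have P_1 i : par h = \sum_j par (P i j) * 1.
  by rewrite -(rows_h i) rmorph_sum; apply: eq_bigr => j _; rewrite mulr1.
have [e0 e1 e2 e3] := RF_pattern_mulE al a y.
have [r0 r1 _ r3] := RF_pattern_mulE al a (fun=> 1).
rewrite -!P_y in e0 e1 e2 e3; rewrite -!P_1 !mulr1 in r0 r1 r3.
have [[y0 y1 y2 y3]|[y0 y1 y2 y3]] :=
  F2_pattern_kernel (esym e0) (esym e1) (esym e2) (esym e3)
    (etrans (esym r0) r1) (etrans (esym r1) r3).
- apply: forall_ord4;
  by rewrite odd_F2 F2_neq0 -subr_eq0 -/(y _) ?y0 ?y1 ?y2 ?y3.
- have even_n : forall i, (n i)%:R = 0 :> 'F_2.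
    have one_add_one : 1 + 1 = 0 :> 'F_2 by apply/eqP.
    apply: forall_ord4;
    by rewrite -[_%:R](subrK 1) -/(y _) ?y0 ?y1 ?y2 ?y3 one_add_one.
  have [i] := numerical_odd_generator num_n.
  by rewrite odd_F2 even_n eqxx.
Qed.

Theorem proposition4p1 (n : 'I_4 -> nat) (al : 'I_4 -> nat) (a : nat)
    (F h : int) :
  numerical n ->
  minimally_generated n ->
  is_frobenius n F ->
  F = 2 * h ->
  (forall f : int, pseudo_frobenius n f <-> (f = h \/ f = F)) ->
  (forall i : 'I_4, is_alpha n i (al i)) ->
  RF_matrix n h (RF_pattern al a) ->
  (forall i : 'I_4, odd (n i)) <->
  ((~~ (2 %| h)%Z /\ forall i : 'I_4, row_odd (RF_pattern al a) i) \/
   ((2 %| h)%Z /\ forall i : 'I_4, row_even (RF_pattern al a) i)).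
Proof.
move=> num_n _ _ _ _ _ RFh; rewrite -row_parities_agreeP; split.
- exact: RF_row_sum_parity_of_odd RFh.
- exact: RF_pattern_odd_of_row_parities num_n RFh.
Qed.
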